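(* Let $M$ be a smooth Riemannian manifold embedded in $\mathbb{R}^p$, and let $\mathcal{D}\subset\mathbb{R}^d$ be a compact, connected, Lipschitz domain. Let $\mathcal{V}(\mathcal{D},\mathbb{R}^p)\subset C(\mathcal{D},\mathbb{R}^p)$ be a vector space of continuous functions, $\mathcal{V}_h(\mathcal{D},\mathbb{R}^p)\subset \mathcal{V}(\mathcal{D},\mathbb{R}^p)$ a finite-dimensional subspace, and $\mathcal{I}_h:\mathcal{V}(\mathcal{D},\mathbb{R}^p)\to\mathcal{V}_h(\mathcal{D},\mathbb{R}^p)$ a projection. Let $U\subset\mathbb{R}^p$ be a tubular neighborhood of $M$ on which the closest point projection $\mathcal{P}_M(v)=\operatorname{argmin}_{m\in M}\|m-v\|$ is well-defined and smooth. Let $\widetilde{\mathcal{V}}(\mathcal{D},M)=\{u\in\mathcal{V}(\mathcal{D},\mathbb{R}^p): u(x)\in M \text{ and } \mathcal{I}_hu(x)\in U \ \forall x\in\mathcal{D}\}$, and for $u\in\widetilde{\mathcal{V}}(\mathcal{D},M)$ define $(\mathcal{I}_{h,M}u)(x)=\mathcal{P}_M(\mathcal{I}_hu(x))$. Define $C_0(u)=\sup_{x\in\mathcal{D}}\|\nabla u(x)\|$, $C_1=\sup_{m\in M}\|\nabla\mathcal{P}_M(m)\|$, and $C_2=\sup_{u_1,u_2\in U,\,u_1\ne u_2}\frac{\|\nabla\mathcal{P}_M(u_1)-\nabla\mathcal{P}_M(u_2)\|}{\|u_1-u_2\|}$. Then for any $u\in\widetilde{\mathcal{V}}(\mathcal{D},M)\cap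 C^1(\mathcal{D},\mathbb{R}^p)$ and any $x\in\mathcal{D}$ (with $\mathcal{I}_hu$ differentiable at $x$), \[\|\nabla\mathcal{I}_{h,M}u(x)-\nabla u(x)\|\le C_1\|\nabla\mathcal{I}_hu(x)-\nabla u(x)\| + C_2\|\mathcal{I}_hu(x)-u(x)\|\big(\|\nabla\mathcal{I}_hu(x)-\nabla u(x)\|+C_0(u)\big).\]
   Context: $\|\cdot\|$ denotes the Euclidean norm on $\mathbb{R}^p$; for matrices, $\|\cdot\|$ denotes any consistent (submultiplicative, compatible) matrix norm. Here $\nabla u(x)\in\mathbb{R}^{p\times d}$ and $\nabla\mathcal{P}_M(v)\in\mathbb{R}^{p\times p}$ denote the gradients (Jacobian matrices) of $u$ and $\mathcal{P}_M$, viewed as $\mathbb{R}^p$-valued maps via the embedding $M\subset\mathbb{R}^p$. *)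

From HB Require Import structures.
From mathcomp Require Import all_boot all_order all_algebra.
From mathcomp Require Import all_classical all_reals all_analysis.

Set Implicit Arguments.
Unset Strict Implicit.
Unset Printing Implicit Defensive.

Import Order.TTheory GRing.Theory Num.Theory.
Import numFieldNormedType.Exports.

Local Open Scope classical_set_scope.
Local Open Scope ring_scope.

Section Defs.
Variable R : realType.

Definition enorm (n : nat) (v : 'cV[R]_n) : R :=
  Num.sqrt (\sum_(i < n) v i 0 ^+ 2).

Definition dotv (n : nat) (v w : 'cV[R]_n) : R := \sum_(i < n) v i 0 * w i 0.

Definition consistent_mxnorm (N : forall m n : nat, 'M[R]_(m, n) -> R) : Prop :=
  (forall m n (A : 'M[R]_(m, n)), 0 <= N m n A) /\
  (forall m n (A : 'M[R]_(m, n)), N m n A = 0 -> A = 0) /\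
  (forall m n (a : R) (A : 'M[R]_(m, n)), N m n (a *: A) = `|a| * N m n A) /\
  (forall m n (A B : 'M[R]_(m, n)), N m n (A + B) <= N m n A + N m n B) /\
  (forall m n k (A : 'M[R]_(m, n)) (B : 'M[R]_(n, k)),
      N m k (A *m B) <= N m n A * N n k B) /\
  (forall m n (A : 'M[R]_(m, n)) (v : 'cV[R]_n),
      enorm (A *m v) <= N m n A * enorm v).

Definition jac (n q : nat) (f : 'cV[R]_n -> 'cV[R]_q) (x : 'cV[R]_n) : 'M[R]_(q, n) :=
  \matrix_(i < q, j < n) ('D_(delta_mx j 0) f x) i 0.

Definition iter_D (n q : nat) (vs : seq 'cV[R]_n) (f : 'cV[R]_n -> 'cV[R]_q)
  : 'cV[R]_n -> 'cV[R]_q :=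
  foldr (fun v g => 'D_v g) f vs.

Definition smooth_on (n q : nat) (U : set 'cV[R]_n) (f : 'cV[R]_n -> 'cV[R]_q) : Prop :=
  forall (vs : seq 'cV[R]_n) (v : 'cV[R]_n) (x : 'cV[R]_n), U x ->
    derivable (iter_D vs f) x v /\ {for x, continuous (iter_D vs f)}.

(* M is a smooth embedded submanifold of R^p (of some dimension k), given
   locally as the regular zero set of a smooth submersion. *)
Definition embedded_submanifold (p : nat) (M : set 'cV[R]_p) : Prop :=
  exists k : nat, (k <= p)%N /\
    forall m, M m -> exists (W : set 'cV[R]_p) (F : 'cV[R]_p -> 'cV[R]_(p - k)),
      [/\ open W, W m, smooth_on W F,
          (forall y, W y -> \rank (jac F y) = (p - k)%N) &
          (forall y, W y -> (M y <-> F y = 0))].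

(* D is the closure of a bounded Lipschitz domain (nonempty connected open set
   whose boundary is locally the graph of a Lipschitz function). *)
Definition lipschitz_domain (d : nat) (D : set 'cV[R]_d) : Prop :=
  exists Om : set 'cV[R]_d,
    [/\ open Om, Om !=set0, connected Om, D = closure Om &
      forall x, closure Om x -> ~ Om x ->
        exists (r : R) (e : 'cV[R]_d) (g : 'cV[R]_d -> R) (L : R),
          [/\ 0 < r, enorm e = 1,
              (forall y z, `|g y - g z| <= L * enorm (y - z)) &
              (forall y, enorm (y - x) < r ->
                 (Om y <-> dotv y e > g (y - dotv y e *: e)))]].

Definition is_rel_grad (d p : nat) (D : set 'cV[R]_d) (f : 'cV[R]_d -> 'cV[R]_p)
  (x : 'cV[R]_d) (J : 'M[R]_(p, d)) : Prop :=
  forall eps : R, 0 < eps -> exists2 delta : R, 0 < delta &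
    forall y, D y -> enorm (y - x) < delta ->
      enorm (f y - f x - J *m (y - x)) <= eps * enorm (y - x).

Definition fun_subspace (d p : nat) (V : set ('cV[R]_d -> 'cV[R]_p)) : Prop :=
  V (fun _ => 0) /\
  forall (a : R) f g, V f -> V g -> V (fun y => a *: f y + g y).

Definition finite_dim_subspace (d p : nat) (V Vh : set ('cV[R]_d -> 'cV[R]_p)) : Prop :=
  exists (n : nat) (b : 'I_n -> 'cV[R]_d -> 'cV[R]_p),
    (forall i, V (b i)) /\
    forall f, Vh f <-> exists c : 'I_n -> R, f = (fun y => \sum_(i < n) c i *: b i y).

Definition projection_onto (d p : nat) (V Vh : set ('cV[R]_d -> 'cV[R]_p))
  (Ih : ('cV[R]_d -> 'cV[R]_p) -> ('cV[R]_d -> 'cV[R]_p)) : Prop :=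
  (forall f, V f -> Vh (Ih f)) /\
  (forall (a : R) f g, V f -> V g ->
      Ih (fun y => a *: f y + g y) = (fun y => a *: Ih f y + Ih g y)) /\
  (forall f, Vh f -> Ih f = f).

Definition closest_point_proj_on (p : nat) (M U : set 'cV[R]_p)
  (P : 'cV[R]_p -> 'cV[R]_p) : Prop :=
  [/\ open U, M `<=` U, smooth_on U P &
    forall v, U v ->
      [/\ M (P v),
          (forall m, M m -> enorm (P v - v) <= enorm (m - v)) &
          (forall m, M m -> enorm (m - v) <= enorm (P v - v) -> m = P v)]].

Local Open Scope ereal_scope.

Definition C0_const (d p : nat) (N : forall m n : nat, 'M[R]_(m, n) -> R)
  (D : set 'cV[R]_d) (Du : 'cV[R]_d -> 'M[R]_(p, d)) : \bar R :=
  ereal_sup [set (N p d (Du y))%:E | y in D].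

Definition C1_const (p : nat) (N : forall m n : nat, 'M[R]_(m, n) -> R)
  (M : set 'cV[R]_p) (P : 'cV[R]_p -> 'cV[R]_p) : \bar R :=
  ereal_sup [set (N p p (jac P m))%:E | m in M].

Definition C2_const (p : nat) (N : forall m n : nat, 'M[R]_(m, n) -> R)
  (U : set 'cV[R]_p) (P : 'cV[R]_p -> 'cV[R]_p) : \bar R :=
  ereal_sup [set z | exists u1 u2, [/\ U u1, U u2, u1 != u2 &
     z = (N p p (jac P u1 - jac P u2) / enorm (u1 - u2))%:E]].

End Defs.

From HB Require Import structures.
From mathcomp Require Import all_boot all_order all_algebra.
From mathcomp Require Import all_classical all_reals all_analysis.
From mathcomp Require Import ring lra.

Import Order.TTheory GRing.Theory Num.Theory.
Import numFieldNormedType.Exports.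

Local Open Scope classical_set_scope.
Local Open Scope ring_scope.

Set Implicit Arguments.
Unset Strict Implicit.

(* By the chain rule, the gradient of P \o Ih u at x is jac P (Ih u x) *m JI, and since P fixes M
   while u takes values in M, also Du x = jac P (u x) *m Du x.  Subtracting,
     J - Du x = jac P (u x) *m (JI - Du x) + (jac P (Ih u x) - jac P (u x)) *m JI,
   and the three factors are bounded by C_1, C_2 |Ih u x - u x| and N (JI - Du x) + C_0.
   Two analytic facts make this rigorous: relative gradients on D are unique because a
   Lipschitz domain contains a small open cone with vertex at each of its points, and a smooth
   P is Frechet differentiable since, by the mean value theorem along the coordinate
   directions, continuous partial derivatives control the increments of P. *)

Section Euclidean.
Variables (R : realType) (n : nat).
Implicit Types (v w : 'cV[R]_n) (a : R).

Lemma dotvv v : dotv v v = \sum_(i < n) v i 0 ^+ 2.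
Proof. by apply: eq_bigr => i _; rewrite expr2. Qed.

Lemma dotvv_ge0 v : 0 <= dotv v v.
Proof. by rewrite dotvv sumr_ge0 // => i _; rewrite sqr_ge0. Qed.

Lemma enorm_ge0 v : 0 <= enorm v.
Proof. exact: sqrtr_ge0. Qed.

Lemma enorm_sqr v : enorm v ^+ 2 = dotv v v.
Proof. by rewrite /enorm sqr_sqrtr -dotvv ?dotvv_ge0. Qed.

Lemma enormZ a v : enorm (a *: v) = `|a| * enorm v.
Proof.
rewrite /enorm -sqrtr_sqr -sqrtrM ?sqr_ge0 // mulr_sumr.
by congr Num.sqrt; apply: eq_bigr => i _; rewrite mxE exprMn.
Qed.

Lemma enorm0 : enorm (0 : 'cV[R]_n) = 0.
Proof. by rewrite -(scale0r 0) enormZ normr0 mul0r. Qed.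

Lemma enormN v : enorm (- v) = enorm v.
Proof. by rewrite -scaleN1r enormZ normrN1 mul1r. Qed.

Lemma enormB v w : enorm (v - w) = enorm (w - v).
Proof. by rewrite -enormN opprB. Qed.

Lemma enorm_coord_le v i : `|v i 0| <= enorm v.
Proof.
rewrite -sqrtr_sqr ler_sqrt -?dotvv ?dotvv_ge0 // dotvv (bigD1 i) //=.
by rewrite lerDl sumr_ge0 // => j _; rewrite sqr_ge0.
Qed.

Lemma enorm_eq0 v : enorm v = 0 -> v = 0.
Proof.
move=> v0; apply/matrixP => i j; rewrite (ord1 j) mxE.
by apply/eqP; rewrite -normr_le0 -v0 enorm_coord_le.
Qed.

Lemma dotvDl v1 v2 w : dotv (v1 + v2) w = dotv v1 w + dotv v2 w.
Proof. by rewrite /dotv -big_split; apply: eq_bigr => i _; rewrite mxE mulrDl. Qed.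

Lemma dotvZl a v w : dotv (a *: v) w = a * dotv v w.
Proof. by rewrite /dotv mulr_sumr; apply: eq_bigr => i _; rewrite mxE mulrA. Qed.

Lemma dotvBl v1 v2 w : dotv (v1 - v2) w = dotv v1 w - dotv v2 w.
Proof. by rewrite /dotv -sumrB; apply: eq_bigr => i _; rewrite !mxE mulrBl. Qed.

Lemma dotvC v w : dotv v w = dotv w v.
Proof. by apply: eq_bigr => i _; rewrite mulrC. Qed.

Lemma dotv_sqr_le v w : dotv v w ^+ 2 <= dotv v v * dotv w w.
Proof.
pose a i := v i 0; pose b i := w i 0.
pose f i j := a i ^+ 2 * b j ^+ 2 - a i * b i * (a j * b j).
have lagrange : \sum_(i < n) \sum_(j < n) (a i * b j - a j * b i) ^+ 2 =
    (dotv v v * dotv w w - dotv v w ^+ 2) *+ 2.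
  transitivity (\sum_(i < n) \sum_(j < n) (f i j + f j i)).
    by apply: eq_bigr => i _; apply: eq_bigr => j _; rewrite /f; ring.
  rewrite (eq_bigr _ (fun i _ => big_split _ _ _ _ _)) big_split /=.
  rewrite [X in _ + X]exchange_big /= -mulr2n !dotvv /dotv expr2 !mulr_suml -sumrB.
  congr (_ *+ 2); apply: eq_bigr => i _.
  by rewrite !mulr_sumr -sumrB; apply: eq_bigr => j _.
have : 0 <= \sum_(i < n) \sum_(j < n) (a i * b j - a j * b i) ^+ 2.
  by apply: sumr_ge0 => i _; apply: sumr_ge0 => j _; rewrite sqr_ge0.
by rewrite lagrange pmulrn_lge0 // subr_ge0.
Qed.

Lemma dotv_le v w : `|dotv v w| <= enorm v * enorm w.
Proof.
rewrite -ler_sqr ?nnegrE ?mulr_ge0 ?enorm_ge0 //.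
by rewrite real_normK ?num_real // exprMn !enorm_sqr dotv_sqr_le.
Qed.

Lemma enormD v w : enorm (v + w) <= enorm v + enorm w.
Proof.
rewrite -ler_sqr ?nnegrE ?addr_ge0 ?enorm_ge0 //.
rewrite sqrrD !enorm_sqr dotvDl !(dotvC _ (v + w)) !dotvDl (dotvC w v).
have := ler_norm (dotv v w); have := dotv_le v w; lra.
Qed.

Lemma coord_le_mx_norm v i : `|v i 0| <= `|v|.
Proof.
rewrite [`|v|]mx_normrE.
exact: (le_bigmax _ (fun ij : 'I_n * 'I_1 => `|v ij.1 ij.2|) (i, 0)).
Qed.

Lemma mx_norm_le_enorm v : `|v| <= enorm v.
Proof.
rewrite [`|v|]mx_normrE; apply: bigmax_le => [|[i j] _ /=]; first exact: enorm_ge0.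
by rewrite (ord1 j) enorm_coord_le.
Qed.

Lemma enorm_le_entrywise v w : (forall i, `|v i 0| <= `|w i 0|) -> enorm v <= enorm w.
Proof.
move=> vw; rewrite /enorm ler_sqrt; last by rewrite -dotvv dotvv_ge0.
apply: ler_sum => i _.
by rewrite -(real_normK (num_real (v i 0))) -(real_normK (num_real (w i 0))) lerXn2r ?nnegrE.
Qed.

Lemma enorm_le_coord_bound v b :
  0 <= b -> (forall i, `|v i 0| <= b) -> enorm v <= n%:R * b.
Proof.
move=> b0 vb.
rewrite -ler_sqr ?nnegrE ?mulr_ge0 ?enorm_ge0 // enorm_sqr dotvv.
have entry_sqr i : v i 0 ^+ 2 <= b ^+ 2.
  by rewrite -real_normK ?num_real // lerXn2r ?nnegrE.
apply: le_trans (ler_sum _ (fun i _ => entry_sqr i)) _.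
rewrite sumr_const card_ord -[b ^+ 2 *+ _]mulr_natl exprMn.
apply: ler_wpM2r; rewrite ?sqr_ge0 // -natrX ler_nat.
by case: (n) => // m; rewrite expnS expn1 leq_pmulr.
Qed.

Lemma enorm_le_mx_norm v : enorm v <= n%:R * `|v|.
Proof. exact: enorm_le_coord_bound (normr_ge0 v) (coord_le_mx_norm v). Qed.

End Euclidean.

Section EnormBalls.
Variables (R : realType) (n : nat).
Implicit Types (x y : 'cV[R]_n) (A : set 'cV[R]_n).

Lemma nbhs_enorm_ball x r : 0 < r -> nbhs x [set y | enorm (y - x) < r].
Proof.
move=> r0; apply/nbhs_ballP; exists (r / n.+1%:R) => [|y]; first by rewrite /= divr_gt0.
rewrite mx_norm_ball /ball_ /= -normrN opprB => yx.
apply: le_lt_trans (enorm_le_mx_norm _) _.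
rewrite (@le_lt_trans _ _ (n.+1%:R * `|y - x|)) //.
  by apply: ler_wpM2r; rewrite ?ler_nat.
by rewrite mulrC -ltr_pdivlMr ?ltr0n.
Qed.

Lemma nbhs_enorm_ballP x A :
  nbhs x A -> exists2 r, 0 < r & forall y, enorm (y - x) < r -> A y.
Proof.
move=> /nbhs_ballP[r r0 xrA]; exists r => // y yx; apply: xrA.
rewrite mx_norm_ball /ball_ /= -normrN opprB.
exact: le_lt_trans (mx_norm_le_enorm _) yx.
Qed.

Lemma closure_enorm A x r : closure A x -> 0 < r -> exists2 y, A y & enorm (y - x) < r.
Proof. by move=> Ax r0; have [y [Ay yx]] := Ax _ (nbhs_enorm_ball x r0); exists y. Qed.

End EnormBalls.

Section ConsistentNorm.
Variables (R : realType) (N : forall m n : nat, 'M[R]_(m, n) -> R).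
Arguments N : clear implicits.
Hypothesis N_consistent : consistent_mxnorm N.

Lemma mxnorm_ge0 m n (A : 'M[R]_(m, n)) : 0 <= N m n A.
Proof. by case: N_consistent. Qed.

Lemma mxnorm0 m n : N m n 0 = 0.
Proof.
have [_ [_ [NZ _]]] := N_consistent.
by rewrite -(scale0r (0 : 'M[R]_(m, n))) NZ normr0 mul0r.
Qed.

Lemma mxnormD m n (A B : 'M[R]_(m, n)) : N m n (A + B) <= N m n A + N m n B.
Proof. by case: N_consistent => _ [_ [_ []]]. Qed.

Lemma mxnormM m n k (A : 'M[R]_(m, n)) (B : 'M[R]_(n, k)) :
  N m k (A *m B) <= N m n A * N n k B.
Proof. by case: N_consistent => _ [_ [_ [_ []]]]. Qed.

Lemma enorm_mulmx_le m n (A : 'M[R]_(m, n)) v : enorm (A *m v) <= N m n A * enorm v.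
Proof. by case: N_consistent => _ [_ [_ [_ [_]]]]. Qed.

End ConsistentNorm.

Lemma subrACA (V : zmodType) (a b c e : V) : a - b - (c - e) = a - c - (b - e).
Proof. by rewrite !opprD !opprK addrACA. Qed.

Section RelativeGradient.
Variables (R : realType) (d p : nat) (D : set 'cV[R]_d).
Implicit Types (f g : 'cV[R]_d -> 'cV[R]_p) (x : 'cV[R]_d) (A B : 'M[R]_(p, d)).

Lemma is_rel_grad_eq_on f g x A :
  {in D, f =1 g} -> D x -> is_rel_grad D f x A -> is_rel_grad D g x A.
Proof.
move=> fg Dx fA eps eps0; have [delta delta0 near_x] := fA eps eps0.
by exists delta => // y Dy; rewrite -!fg ?inE //; exact: near_x.
Qed.

Lemma is_rel_gradB f g x A B : is_rel_grad D f x A -> is_rel_grad D g x B ->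
  is_rel_grad D (fun y => f y - g y) x (A - B).
Proof.
move=> fA gB eps eps0; have eps20 : 0 < eps / 2 by rewrite divr_gt0.
have [dA dA0 nearA] := fA _ eps20; have [dB dB0 nearB] := gB _ eps20.
exists (Num.min dA dB) => [|y Dy]; first by rewrite lt_min dA0 dB0.
rewrite lt_min => /andP[yA yB].
have -> : f y - g y - (f x - g x) - (A - B) *m (y - x) =
    (f y - f x - A *m (y - x)) - (g y - g x - B *m (y - x)).
  by rewrite mulmxBl (subrACA (f y)) (subrACA (f y - f x)).
apply: le_trans (enormD _ _) _; rewrite enormN (splitr eps) mulrDl.
by apply: lerD; [exact: nearA | exact: nearB].
Qed.

End RelativeGradient.

Section RelGradComp.
Variables (R : realType) (N : forall m n : nat, 'M[R]_(m, n) -> R).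
Arguments N : clear implicits.
Hypothesis N_consistent : consistent_mxnorm N.
Variables (d p q : nat) (D : set 'cV[R]_d).

Lemma rel_grad_lipschitz (f : 'cV[R]_d -> 'cV[R]_p) x A : is_rel_grad D f x A ->
  exists2 delta, 0 < delta & forall y, D y -> enorm (y - x) < delta ->
    enorm (f y - f x) <= (N p d A + 1) * enorm (y - x).
Proof.
move=> fA; have [delta delta0 near_x] := fA 1 ltr01.
exists delta => // y Dy yx.
rewrite -[f y - f x](subrK (A *m (y - x))) mulrDl mul1r [X in _ <= X]addrC.
apply: le_trans (enormD _ _) _; apply: lerD; last exact: enorm_mulmx_le.
by rewrite -[X in _ <= X]mul1r near_x.
Qed.

Lemma rel_grad_comp (f : 'cV[R]_d -> 'cV[R]_p) (g : 'cV[R]_p -> 'cV[R]_q) x A B :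
  is_rel_grad D f x A -> is_rel_grad setT g (f x) B ->
  is_rel_grad D (g \o f) x (B *m A).
Proof.
move=> fA gB eps eps0.
have [dL dL0 lip_f] := rel_grad_lipschitz fA.
set K := N p d A + 1; set L := N q p B + 1.
have K0 : 0 < K by rewrite ltr_wpDl ?mxnorm_ge0.
have L0 : 0 < L by rewrite ltr_wpDl ?mxnorm_ge0.
have epsK0 : 0 < eps / (2 * K) by rewrite divr_gt0 ?mulr_gt0.
have epsL0 : 0 < eps / (2 * L) by rewrite divr_gt0 ?mulr_gt0.
have [dg dg0 near_g] := gB _ epsK0.
have [df df0 near_f] := fA _ epsL0.
exists (Num.min dL (Num.min df (dg / K))) => [|y Dy].
  by rewrite !lt_min dL0 df0 divr_gt0.
rewrite !lt_min => /and3P[ydL ydf ydg] /=.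
have fyx := lip_f y Dy ydL.
have -> : g (f y) - g (f x) - B *m A *m (y - x) =
    (g (f y) - g (f x) - B *m (f y - f x)) + B *m (f y - f x - A *m (y - x)).
  by rewrite (mulmxBr B (f y - f x)) mulmxA subrKA.
apply: le_trans (enormD _ _) _; rewrite [eps]splitr mulrDl.
have ey0 := enorm_ge0 (y - x).
apply: lerD.
  apply: le_trans (near_g (f y) I _) _.
    by apply: le_lt_trans fyx _; rewrite mulrC -ltr_pdivlMr.
  apply: le_trans (ler_wpM2l (ltW epsK0) fyx) _.
  by rewrite -/K mulrA invfM mulrA mulfVK ?gt_eqF.
apply: le_trans (enorm_mulmx_le N_consistent _ _) _.
apply: le_trans (ler_wpM2l (mxnorm_ge0 N_consistent _) (near_f y Dy ydf)) _.
rewrite mulrA ler_wpM2r //.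
have -> : N q p B * (eps / (2 * L)) = N q p B / L * (eps / 2) by field; rewrite gt_eqF.
by rewrite ler_piMl ?divr_ge0 ?ltW // ltr_pdivrMr // mul1r ltrDl.
Qed.

End RelGradComp.

Definition cone_condition (R : realType) d (D : set 'cV[R]_d) (x : 'cV[R]_d) : Prop :=
  exists e (c t0 : R), [/\ 0 < c, 0 < t0 &
    forall t w, 0 < t -> t < t0 -> enorm w < c * t -> D (x + t *: e + w)].

Lemma mulmx_ball_eq0 (R : realType) m n (C : 'M[R]_(m, n)) c :
  0 < c -> (forall w, enorm w < c -> C *m w = 0) -> C = 0.
Proof.
move=> c0 Cw0.
have {}Cw0 (w : 'cV[R]_n) : C *m w = 0.
  have E0 : 0 < enorm w + c by rewrite ltr_wpDl ?enorm_ge0.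
  have s0 : 0 < c / (enorm w + c) by rewrite divr_gt0.
  have := Cw0 ((c / (enorm w + c)) *: w).
  rewrite enormZ gtr0_norm // mulrAC ltr_pdivrMr // ltr_pM2l // ltrDl c0.
  by rewrite -scalemxAr => /(_ isT) /eqP; rewrite scaler_eq0 (gt_eqF s0) => /eqP.
apply/matrixP => i j; have := congr1 (fun v : 'cV[R]_m => v i 0) (Cw0 (delta_mx j 0)).
by rewrite -colE !mxE.
Qed.

Section RelGradUnique.
Variables (R : realType) (d p : nat) (D : set 'cV[R]_d) (x : 'cV[R]_d).
Hypothesis D_cone : cone_condition D x.

Lemma cone_rel_grad0_eq0 (C : 'M[R]_(p, d)) : is_rel_grad D (fun=> 0) x C -> C = 0.
Proof.
have [e [c [t0 [c0 t00 coneD]]]] := D_cone.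
move=> C0; apply: (mulmx_ball_eq0 c0) => w wc.
apply: enorm_eq0; apply/eqP; rewrite eq_le enorm_ge0 andbT.
apply/ler_addgt0Pr => eps eps0; rewrite add0r.
have ec0 : 0 < enorm e + c by rewrite ltr_wpDl ?enorm_ge0.
have eps'0 : 0 < eps / 2 / (enorm e + c) by rewrite !divr_gt0.
have [delta delta0 near_x] := C0 _ eps'0.
pose t := Num.min t0 (delta / (enorm e + c)) / 2.
have t_gt0 : 0 < t by rewrite divr_gt0 // lt_min t00 divr_gt0.
have : t < Num.min t0 (delta / (enorm e + c)) by rewrite ltr_pdivrMr // ltr_pMr ?ltr1n // lt_min t00 divr_gt0.
rewrite lt_min ltr_pdivlMr // => /andP[t_lt_t0 t_small].
have cone_bound w' : enorm w' < c * t -> enorm (C *m (t *: e + w')) <= eps / 2 * t.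
  move=> w'_small; have y_near : enorm (t *: e + w') <= t * (enorm e + c).
    apply: le_trans (enormD _ _) _.
    by rewrite enormZ gtr0_norm // mulrDr lerD2l mulrC ltW.
  have shift : x + t *: e + w' - x = t *: e + w' by rewrite -[x + _ + _]addrA (addrC x) addrK.
  have := near_x _ (coneD _ _ t_gt0 t_lt_t0 w'_small).
  rewrite shift subrr sub0r enormN => /(_ (le_lt_trans y_near t_small)).
  move/le_trans; apply; apply: le_trans (ler_wpM2l (ltW eps'0) y_near) _.
  by rewrite mulrCA mulfVK ?gt_eqF // mulrC.
(* Both t *: e + t *: w and t *: e lie in the cone at distance at most t (|e| + c) from x. *)
have Cw : t *: (C *m w) = C *m (t *: e + t *: w) - C *m (t *: e + 0).
  by rewrite addr0 -mulmxBr addrC addKr scalemxAr.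
have : enorm (t *: (C *m w)) <= t * eps.
  rewrite Cw; apply: le_trans (enormD _ _) _; rewrite enormN (splitr eps) mulrDr.
  rewrite mulrC lerD ?cone_bound //.
    by rewrite enormZ gtr0_norm // mulrC ltr_pM2r.
  by rewrite enorm0 mulr_gt0.
by rewrite enormZ gtr0_norm // ler_pM2l.
Qed.

Lemma rel_grad_unique (f : 'cV[R]_d -> 'cV[R]_p) A B :
  is_rel_grad D f x A -> is_rel_grad D f x B -> A = B.
Proof.
move=> fA fB; apply/eqP; rewrite -subr_eq0; apply/eqP/cone_rel_grad0_eq0.
by have := is_rel_gradB fA fB; under eq_fun do rewrite subrr.
Qed.

End RelGradUnique.

Section LipschitzGraph.
Variables (R : realType) (d : nat) (e : 'cV[R]_d) (g : 'cV[R]_d -> R) (L : R).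
Hypothesis e_unit : enorm e = 1.
Hypothesis g_lipschitz : forall y z, `|g y - g z| <= L * enorm (y - z).

(* Signed height of y above the graph of g over the hyperplane orthogonal to e. *)
Definition graph_height (y : 'cV[R]_d) : R := dotv y e - g (y - dotv y e *: e).

Lemma dotv_unit_le w : `|dotv w e| <= enorm w.
Proof. by have := dotv_le w e; rewrite e_unit mulr1. Qed.

Lemma graph_height_translate y t : graph_height (y + t *: e) = graph_height y + t.
Proof.
have ee : dotv e e = 1 by rewrite -enorm_sqr e_unit expr1n.
rewrite /graph_height dotvDl dotvZl ee mulr1 scalerDl opprD addrACA subrr addr0.
by rewrite addrAC.
Qed.

Lemma graph_height_lipschitz y z :
  `|graph_height y - graph_height z| <= (2 * `|L| + 1) * enorm (y - z).
Proof.
have proj_le : enorm (y - dotv y e *: e - (z - dotv z e *: e)) <= 2 * enorm (y - z).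
  rewrite subrACA -scalerBl -dotvBl; apply: le_trans (enormD _ _) _.
  by rewrite enormN enormZ e_unit mulr1 mulr2n mulrDl mul1r lerD2l dotv_unit_le.
have g_le := le_trans (g_lipschitz (y - dotv y e *: e) (z - dotv z e *: e))
  (ler_wpM2r (enorm_ge0 _) (ler_norm L)).
rewrite /graph_height subrACA -dotvBl; apply: le_trans (ler_normB _ _) _.
rewrite mulrDl mul1r addrC lerD ?dotv_unit_le //.
apply: le_trans g_le _; rewrite [2 * _]mulrC -mulrA; exact: ler_wpM2l.
Qed.

Lemma graph_chart_cone (Om : set 'cV[R]_d) x r : 0 < r ->
  (forall y, enorm (y - x) < r -> (Om y <-> dotv y e > g (y - dotv y e *: e))) ->
  closure Om x -> cone_condition (closure Om) x.
Proof.
move=> r0 chart Omx; pose K := 2 * `|L| + 1.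
have K1 : 1 <= K by rewrite lerDr mulr_ge0.
have K0 : 0 < K := lt_le_trans ltr01 K1.
have chartE y : enorm (y - x) < r -> Om y <-> 0 < graph_height y.
  by move=> /chart ->; rewrite subr_gt0.
have height_x : 0 <= graph_height x.
  rewrite -oppr_le0; apply/ler_addgt0Pr => eps eps0; rewrite add0r.
  have [|y Omy] := closure_enorm Omx (r := Num.min r (eps / K)).
    by rewrite lt_min r0 divr_gt0.
  rewrite lt_min ltr_pdivlMr // mulrC => /andP[yr yeps].
  have := (chartE y yr).1 Omy.
  have := le_trans (ler_norm _) (graph_height_lipschitz y x).
  rewrite -/K => lip hy; have := le_lt_trans lip yeps; lra.
exists e, K^-1, (r / 2); split=> [||t w t_gt0 t_small w_small].
- by rewrite invr_gt0.
- by rewrite divr_gt0.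
have Kw : K * enorm w < t by rewrite mulrC -ltr_pdivlMr // mulrC.
have w_lt_t : enorm w < t.
  by apply: le_lt_trans Kw; rewrite ler_peMl ?enorm_ge0.
have near_x : enorm (x + t *: e + w - x) < r.
  rewrite -[x + _ + _]addrA (addrC x) addrK; apply: le_lt_trans (enormD _ _) _.
  rewrite enormZ e_unit mulr1 gtr0_norm //.
  move: t_small; rewrite ltr_pdivlMr //; lra.
apply/subset_closure/(chartE _ near_x).
rewrite addrAC graph_height_translate.
have := le_trans (ler_norm _) (graph_height_lipschitz x (x + w)).
rewrite enormB (addrC x) addrK -/K.
lra.
Qed.

End LipschitzGraph.

Lemma lipschitz_domain_cone (R : realType) d (D : set 'cV[R]_d) x :
  lipschitz_domain D -> D x -> cone_condition D x.
Proof.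
case=> Om [Om_open _ _ -> chart] Dx.
have [Omx | nOmx] := pselect (Om x).
  have [r r0 ball_r] := nbhs_enorm_ballP (open_nbhs_nbhs (conj Om_open Omx)).
  exists 0, 1, r; split=> // t w t_gt0 tr wt; apply: subset_closure.
  rewrite scaler0 addr0; apply: ball_r; rewrite (addrC x) addrK.
  by rewrite mul1r in wt; exact: lt_trans tr.
have [r [e [g [L [r0 e_unit g_lip Om_chart]]]]] := chart x Dx nOmx.
exact (graph_chart_cone e_unit g_lip r0 Om_chart Dx).
Qed.

Section Truncation.
Variables (R : realType) (n : nat).
Implicit Types (h : 'cV[R]_n).

Definition trunc_cV (k : nat) h : 'cV[R]_n := \col_i (if (i < k)%N then h i 0 else 0).

Lemma trunc_cV0 h : trunc_cV 0 h = 0.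
Proof. by apply/matrixP => i j; rewrite !mxE. Qed.

Lemma trunc_cV_full h : trunc_cV n h = h.
Proof. by apply/matrixP => i j; rewrite !mxE ltn_ord (ord1 j). Qed.

Lemma trunc_cVS h (k : 'I_n) : trunc_cV k.+1 h = trunc_cV k h + h k 0 *: delta_mx k 0.
Proof.
apply/matrixP => i j; rewrite !mxE (ord1 j) eqxx andbT ltnS leq_eqVlt.
have [->|ik] := eqVneq i k; first by rewrite eqxx ltnn mulr1 add0r.
by rewrite mulr0 addr0 (negbTE (ik : (i : nat) != k)).
Qed.

Lemma enorm_trunc_line_le h (k : 'I_n) s :
  `|s| <= `|h k 0| -> enorm (trunc_cV k h + s *: delta_mx k 0) <= enorm h.
Proof.
move=> sk; apply: enorm_le_entrywise => i; rewrite !mxE eqxx andbT.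
have [->|ik] := eqVneq i k; first by rewrite ltnn mulr1 add0r.
by rewrite mulr0 addr0; case: ifP => // _; rewrite normr0 normr_ge0.
Qed.

End Truncation.

Section PartialDerivatives.
Variables (R : realType) (n q : nat) (f : 'cV[R]_n -> 'cV[R]_q).

Lemma is_derive_line_coord z v s i : derivable f (z + s *: v) v ->
  is_derive s 1 (fun t : R => f (z + t *: v) i 0) ('D_v f (z + s *: v) i 0).
Proof.
move=> df; pose phi t := f (z + t *: v) i 0.
have quotE : (fun h : R => h^-1 *: (phi (h *: 1 + s) - phi s)) =
    (fun w : 'cV[R]_q => w i 0) \o
    (fun h : R => h^-1 *: (f (h *: v + (z + s *: v)) - f (z + s *: v))).
  by apply/funext => h /=; rewrite /phi [_ *: 1]mulr1 !mxE scalerDl addrCA.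
have quot_cvg : (fun h : R => h^-1 *: (phi (h *: 1 + s) - phi s)) @ 0^' -->
    'D_v f (z + s *: v) i 0.
  by rewrite quotE; apply: continuous_cvg; [exact: coord_continuous | exact: df].
apply: DeriveDef; first by apply/cvg_ex; eexists; exact: quot_cvg.
by apply: cvg_lim.
Qed.

Lemma mvt_line_coord z v a i :
  (forall s, `|s| <= `|a| -> derivable f (z + s *: v) v) ->
  exists2 c, `|c| <= `|a| &
    f (z + a *: v) i 0 - f z i 0 = 'D_v f (z + c *: v) i 0 * a.
Proof.
move=> df; pose phi t := f (z + t *: v) i 0.
have mvt b1 b2 : b1 <= b2 -> (forall s, b1 <= s <= b2 -> `|s| <= `|a|) ->
    exists2 c, `|c| <= `|a| & phi b2 - phi b1 = 'D_v f (z + c *: v) i 0 * (b2 - b1).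
  move=> b12 in_range.
  have dphi s : s \in `[b1, b2] -> is_derive s 1 phi ('D_v f (z + s *: v) i 0).
    by rewrite in_itv => /in_range /df; exact: is_derive_line_coord.
  have phi_cont : {within `[b1, b2], continuous phi}.
    by apply: derivable_within_continuous => s /dphi [].
  have [c c_in E] := MVT_segment b12 (fun s s_in => dphi s (subset_itv_oo_cc s_in)) phi_cont.
  by exists c => //; apply: in_range; move: c_in; rewrite in_itv.
have phi0 : f z i 0 = phi 0 by rewrite /phi scale0r addr0.
have [a0|a0] := leP 0 a.
  have [|c ca E] := mvt 0 a a0; last by exists c; rewrite // phi0 E subr0.
  by move=> s /andP[s0 sa]; rewrite !ger0_norm.
have [|c ca E] := mvt a 0 (ltW a0); last first.
  by exists c; rewrite // phi0 -opprB E sub0r mulrN opprK.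
move=> s /andP[a_s s0]; rewrite !ler0_norm ?lerN2 //; exact: ltW.
Qed.

Lemma rel_grad_residual_telescope y h i :
  (f (y + h) - f y - jac f y *m h) i 0 = \sum_(k < n)
    (f (y + trunc_cV k.+1 h) i 0 - f (y + trunc_cV k h) i 0
     - 'D_(delta_mx k 0) f y i 0 * h k 0).
Proof.
pose g k := f (y + trunc_cV k h) i 0.
rewrite sumrB -(big_mkord xpredT (fun k => g k.+1 - g k)) telescope_sumr // /g.
rewrite trunc_cV_full trunc_cV0 addr0 !mxE.
by congr (_ - _); apply: eq_bigr => k _; rewrite !mxE.
Qed.

Lemma coord_increment_le y h (k : 'I_n) i r eps :
  (forall z, enorm (z - y) < r -> derivable f z (delta_mx k 0) /\
     `|'D_(delta_mx k 0) f y i 0 - 'D_(delta_mx k 0) f z i 0| <= eps) ->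
  enorm h < r ->
  `|f (y + trunc_cV k.+1 h) i 0 - f (y + trunc_cV k h) i 0
    - 'D_(delta_mx k 0) f y i 0 * h k 0| <= eps * `|h k 0|.
Proof.
move=> near_y hr.
have on_segment s : `|s| <= `|h k 0| ->
    enorm (y + trunc_cV k h + s *: delta_mx k 0 - y) < r.
  move=> sk; rewrite -[y + _ + _]addrA (addrC y) addrK.
  exact: le_lt_trans (enorm_trunc_line_le sk) hr.
have [c ck E] := mvt_line_coord i (fun s sk => (near_y _ (on_segment s sk)).1).
rewrite trunc_cVS addrA E -mulrBl normrM distrC ler_wpM2r //.
exact: (near_y _ (on_segment c ck)).2.
Qed.

Lemma partials_rel_grad y :
  (\forall z \near y, forall k, derivable f z (delta_mx k 0)) ->
  (forall k, {for y, continuous ('D_(delta_mx k 0) f)}) ->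
  is_rel_grad setT f y (jac f y).
Proof.
move=> df cD eps eps0; pose eps' := eps / (q * n).+1%:R.
have eps'0 : 0 < eps' by rewrite divr_gt0.
have partial_near k i : \forall z \near y, derivable f z (delta_mx k 0) /\
    `|'D_(delta_mx k 0) f y i 0 - 'D_(delta_mx k 0) f z i 0| <= eps'.
  have coord_cvg : (fun z => 'D_(delta_mx k 0) f z i 0) @ y --> 'D_(delta_mx k 0) f y i 0.
    exact: (continuous_cvg _ (@coord_continuous _ _ _ i 0 _) (cD k)).
  have D_near := (cvgrPdist_le _ _).1 coord_cvg _ eps'0.
  near=> z; split; last by near: z; exact: D_near.
  by near: z; apply: filterS df => z; apply.
have partials_near : \forall z \near y, forall k i, derivable f z (delta_mx k 0) /\
    `|'D_(delta_mx k 0) f y i 0 - 'D_(delta_mx k 0) f z i 0| <= eps'.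
  exact: (filter_forall _ (fun k => filter_forall _ (partial_near k))).
have [r r0 ball_r] := nbhs_enorm_ballP partials_near.
exists r => // z _ zy; have zE : z = y + (z - y) by rewrite addrC subrK.
have residual_le i : `|(f z - f y - jac f y *m (z - y)) i 0| <= eps' * (n%:R * enorm (z - y)).
  rewrite [in f z]zE rel_grad_residual_telescope; apply: le_trans (ler_norm_sum _ _ _) _.
  apply: le_trans (_ : _ <= \sum_(k < n) eps' * `|(z - y) k 0|) _.
    by apply: ler_sum => k _; exact: coord_increment_le (fun w wr => ball_r w wr k i) zy.
  rewrite -mulr_sumr; apply: ler_wpM2l; first exact: ltW.
  apply: le_trans (ler_sum _ (fun k _ => enorm_coord_le (z - y) k)) _.
  by rewrite sumr_const card_ord mulr_natl.
apply: le_trans (enorm_le_coord_bound _ residual_le) _.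
  by rewrite !mulr_ge0 ?enorm_ge0 // ltW.
have -> : q%:R * (eps' * (n%:R * enorm (z - y))) =
    (q * n)%:R / (q * n).+1%:R * (eps * enorm (z - y)) by rewrite /eps' natrM; field.
apply: ler_piMl; first by rewrite mulr_ge0 ?enorm_ge0 // ltW.
by rewrite ler_pdivrMr // mul1r ler_nat.
Unshelve. all: by end_near.
Qed.

Lemma smooth_on_rel_grad (U : set 'cV[R]_n) y :
  open U -> smooth_on U f -> U y -> is_rel_grad setT f y (jac f y).
Proof.
move=> U_open f_smooth Uy; apply: partials_rel_grad.
  apply: filterS (open_nbhs_nbhs (conj U_open Uy)) => z Uz k.
  exact: (f_smooth [::] _ _ Uz).1.
by move=> k; exact: (f_smooth [:: delta_mx k 0] 0 y Uy).2.
Qed.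

End PartialDerivatives.

Lemma closest_point_proj_id (R : realType) p (M U : set 'cV[R]_p) P m :
  closest_point_proj_on M U P -> M m -> P m = m.
Proof.
case=> _ MU _ P_closest Mm; have [_ _ P_unique] := P_closest m (MU m Mm).
by apply/esym/P_unique => //; rewrite subrr enorm0 enorm_ge0.
Qed.

Lemma lee_EFin_bound (R : realType) (a b c1 c2 : R) (C0 C1 C2 : \bar R) :
  0 <= a -> 0 <= b -> 0 <= c1 -> 0 <= c2 ->
  (c1%:E <= C1 -> c2%:E <= C2 -> b%:E <= C0 ->
   (c1 * a + c2 * (a + b))%:E <= C1 * a%:E + C2 * (a%:E + C0))%E.
Proof.
move=> a0 b0 c10 c20 c1C1 c2C2 bC0; rewrite EFinD !EFinM EFinD.
by apply: leeD; apply: lee_pmul; rewrite ?lee_fin ?addr_ge0 // leeD2l.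
Qed.

Section ProjectedGradient.
Variables (R : realType) (N : forall m n : nat, 'M[R]_(m, n) -> R).
Arguments N : clear implicits.
Hypothesis N_consistent : consistent_mxnorm N.
Variables (p d : nat).

Lemma mxnorm_proj_residual_le (G1 Ga : 'M[R]_p) (JI A : 'M[R]_(p, d)) :
  G1 *m A = A ->
  N p d (Ga *m JI - A) <=
    N p p G1 * N p d (JI - A) + N p p (Ga - G1) * (N p d (JI - A) + N p d A).
Proof.
move=> G1A.
have -> : Ga *m JI - A = G1 *m (JI - A) + (Ga - G1) *m JI.
  by rewrite mulmxBr G1A mulmxBl [in RHS]addrC subrKA.
have NJI : N p d JI <= N p d (JI - A) + N p d A by rewrite -{1}(subrK A JI) mxnormD.
apply: le_trans (mxnormD N_consistent _ _) _; apply: lerD; first exact: mxnormM.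
apply: le_trans (mxnormM N_consistent _ _) _.
exact (ler_wpM2l (mxnorm_ge0 N_consistent _) NJI).
Qed.

Lemma C2_const_ge (U : set 'cV[R]_p) P u1 u2 : U u1 -> U u2 ->
  ((N p p (jac P u1 - jac P u2))%:E <= C2_const N U P * (enorm (u1 - u2))%:E)%E.
Proof.
move=> Uu1 Uu2; have [<-|u12] := eqVneq u1 u2.
  by rewrite !subrr enorm0 (mxnorm0 N_consistent) -[0%:E]/(0 : \bar R) mule0.
have e_gt0 : 0 < enorm (u1 - u2).
  rewrite lt_def enorm_ge0 andbT; apply: contra_neq u12 => /enorm_eq0/eqP.
  by rewrite subr_eq0 => /eqP.
rewrite -[N p p _](@divfK _ (enorm (u1 - u2))) ?gt_eqF // EFinM.
apply: lee_pmul; rewrite ?lee_fin ?divr_ge0 ?mxnorm_ge0 ?enorm_ge0 //.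
by apply: ereal_sup_ubound; exists u1, u2.
Qed.

Lemma rel_grad_proj_fixed (M U : set 'cV[R]_p) P (D : set 'cV[R]_d) u x A G :
  closest_point_proj_on M U P -> cone_condition D x -> D x ->
  (forall y, D y -> M (u y)) -> is_rel_grad D u x A ->
  is_rel_grad setT P (u x) G -> G *m A = A.
Proof.
move=> P_proj D_cone Dx uM uA PG.
apply: (rel_grad_unique D_cone (rel_grad_comp N_consistent uA PG)).
apply: is_rel_grad_eq_on Dx uA => y /[!inE] Dy /=.
by rewrite (closest_point_proj_id P_proj (uM y Dy)).
Qed.

End ProjectedGradient.

Unset Implicit Arguments.
Set Strict Implicit.

Theorem proposition2p3 (R : realType) (p d : nat)
  (N : forall m n : nat, 'M[R]_(m, n) -> R)
  (M : set 'cV[R]_p) (D : set 'cV[R]_d)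
  (V Vh : set ('cV[R]_d -> 'cV[R]_p))
  (Ih : ('cV[R]_d -> 'cV[R]_p) -> ('cV[R]_d -> 'cV[R]_p))
  (U : set 'cV[R]_p) (P : 'cV[R]_p -> 'cV[R]_p)
  (u : 'cV[R]_d -> 'cV[R]_p) (Du : 'cV[R]_d -> 'M[R]_(p, d))
  (x : 'cV[R]_d) (JI : 'M[R]_(p, d)) :
  consistent_mxnorm N ->
  embedded_submanifold M ->
  compact D -> connected D -> lipschitz_domain D ->
  fun_subspace V ->
  (forall f, V f -> {within D, continuous f}) ->
  Vh `<=` V -> finite_dim_subspace V Vh ->
  projection_onto V Vh Ih ->
  closest_point_proj_on M U P ->
  (* u in tilde V(D, M) *)
  V u -> (forall y, D y -> M (u y) /\ U (Ih u y)) ->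
  (* u in C^1(D, R^p), with gradient Du *)
  (forall y, D y -> is_rel_grad D u y (Du y)) -> {within D, continuous Du} ->
  D x ->
  (* Ih u differentiable at x, with gradient JI *)
  is_rel_grad D (Ih u) x JI ->
  (exists J, is_rel_grad D (P \o Ih u) x J) /\
  (forall J : 'M[R]_(p, d), is_rel_grad D (P \o Ih u) x J ->
    ((N p d (J - Du x))%:E <=
       C1_const N M P * (N p d (JI - Du x))%:E
       + C2_const N U P * (enorm (Ih u x - u x))%:E
           * ((N p d (JI - Du x))%:E + C0_const N D Du))%E).
Proof.
move=> N_consistent _ _ _ D_lip _ _ _ _ _ P_proj _ u_tilde u_grad _ Dx Ihu_grad.
have [U_open MU P_smooth _] := P_proj.
have [Mux UIhux] := u_tilde x Dx.
have D_cone := lipschitz_domain_cone D_lip Dx.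
have P_grad y : U y -> is_rel_grad setT P y (jac P y) := smooth_on_rel_grad U_open P_smooth.
have PIhu_grad := rel_grad_comp N_consistent Ihu_grad (P_grad _ UIhux).
split=> [|J J_grad]; first by exists (jac P (Ih u x) *m JI).
rewrite (rel_grad_unique D_cone J_grad PIhu_grad).
have Du_tangent := rel_grad_proj_fixed N_consistent P_proj D_cone Dx
  (fun y Dy => (u_tilde y Dy).1) (u_grad x Dx) (P_grad _ (MU _ Mux)).
apply: le_trans (_ : _ <= (N p p (jac P (u x)) * N p d (JI - Du x) + N p p
    (jac P (Ih u x) - jac P (u x)) * (N p d (JI - Du x) + N p d (Du x)))%:E)%E _.
  by rewrite lee_fin (mxnorm_proj_residual_le N_consistent _ _ Du_tangent).
apply: lee_EFin_bound; rewrite ?(mxnorm_ge0 N_consistent) //.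
- by apply: ereal_sup_ubound; exists (u x).
- exact (C2_const_ge N_consistent P UIhux (MU _ Mux)).
- by apply: ereal_sup_ubound; exists x.
Qed.
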